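(* For every $\delta^0$-maderian digraph $F$, $\mathrm{mad}_{\vec{\chi}}(F)\leq \mathrm{mad}_{\delta^0}(F)+1$.
   Context: $\vec{\chi}(D)$ is the dichromatic number (least $k$ such that $V(D)$ partitions into $k$ sets inducing acyclic subdigraphs); $\delta^0(D)=\min\{\delta^+(D),\delta^-(D)\}$ (minimum of minimum out- and in-degree). A subdivision of $F$ is obtained by replacing each arc $(x,y)$ by a directed $(x,y)$-path, internally disjoint with new internal vertices. For a parameter $\gamma$, $F$ is $\gamma$-maderian if some integer $c$ exists such that every digraph $D$ with $\gamma(D)\ge c$ contains a subdivision of $F$ as a subdigraph; $\mathrm{mad}_\gamma(F)$ is the least such $c$. *)

From mathcomp Require Import all_boot.
From mathcomp Require Import boolp classical_sets.

Set Implicit Arguments.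
Unset Strict Implicit.
Unset Printing Implicit Defensive.

(* A (finite) digraph: finite vertex set, arc relation, no loops.
   Using a relation means no parallel arcs; digons (x->y and y->x) are allowed. *)
Record digraph := Digraph {
  dvert :> finType;
  darc : rel dvert;
  darc_irr : irreflexive darc }.

Section DigraphDefs.
Variable D : digraph.

Definition outdeg (x : D) : nat := #|[set y : D | darc x y]|.
Definition indeg (x : D) : nat := #|[set y : D | darc y x]|.

(* delta^0(D) = min (min out-degree, min in-degree); 0 for the empty digraph. *)
Definition delta0 : nat := \big[minn/#|D|]_(x : D) minn (outdeg x) (indeg x).

Definition acyclic_in (S : pred D) : Prop :=
  forall s : seq D, s != [::] -> all S s -> ~~ path.cycle (@darc D) s.

Definition dicolorable (k : nat) : Prop :=
  exists f : D -> 'I_k, forall i : 'I_k, acyclic_in [pred x | f x == i].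

Definition dichromatic : nat :=
  xget 0%N [set k | dicolorable k /\ forall j, dicolorable j -> (k <= j)%N].

End DigraphDefs.

(* D contains a subdivision of F as a subdigraph: an injective map phi of the
   vertices of F into D, and for each arc (x,y) of F a directed (phi x, phi y)-path
   in D whose list of internal vertices is P x y; internal vertices are distinct,
   avoid phi(V(F)), and the paths of distinct arcs are internally disjoint. *)
Definition contains_subdivision (F D : digraph) : Prop :=
  exists (phi : F -> D) (P : F -> F -> seq D),
    injective phi /\
    (forall x y : F, @darc F x y ->
       [/\ path (@darc D) (phi x) (rcons (P x y) (phi y)),
           uniq (P x y) &
           forall z : F, phi z \notin P x y]) /\
    (forall x y x' y' : F, @darc F x y -> @darc F x' y' -> (x, y) != (x', y') ->
       [disjoint P x y & P x' y']).

Definition mad_bound (gamma : digraph -> nat) (F : digraph) (c : nat) : Prop :=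
  forall D : digraph, (c <= gamma D)%N -> contains_subdivision F D.

Definition maderian (gamma : digraph -> nat) (F : digraph) : Prop :=
  exists c, mad_bound gamma F c.

(* mad_gamma(F): least c such that mad_bound gamma F c (0 if F is not gamma-maderian) *)
Definition mad (gamma : digraph -> nat) (F : digraph) : nat :=
  xget 0%N [set c | mad_bound gamma F c /\ forall c', mad_bound gamma F c' -> (c <= c')%N].

From mathcomp Require Import all_boot.
From mathcomp Require Import boolp classical_sets.

Set Implicit Arguments.
Unset Strict Implicit.
Unset Printing Implicit Defensive.

(* A vertex [x] of in- or
   out-degree less than [c] can be deleted without making the rest
   [c]-dicolorable: give [x] a color missing from its small neighbourhood,
   and no monochromatic cycle passes through [x], since such a cycle would
   contain both an out- and an in-neighbour of [x] of that color.  Deleting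
   such vertices while possible leaves a nonempty induced subdigraph with
   [delta0 >= c], which contains a subdivision of [F] whenever
   [mad_bound delta0 F c] holds. *)

Lemma xget_least (P : nat -> Prop) :
  (exists n, P n) ->
  P (xget 0%N [set k | P k /\ forall j, P j -> (k <= j)%N]) /\
  forall j, P j -> (xget 0%N [set k | P k /\ forall j, P j -> (k <= j)%N] <= j)%N.
Proof.
case=> n0 Pn0.
have [|n /asboolP Pn n_min] := @ex_minnP (fun n => `[< P n >]).
  by exists n0; apply/asboolP.
have n_least j : P j -> (n <= j)%N by move=> Pj; apply/n_min/asboolP.
rewrite (@xget_subset1 _ 0%N _ n) //.
by move=> a b [Pa a_min] [Pb b_min]; apply/eqP; rewrite eqn_leq a_min ?b_min.
Qed.

Section Dicoloring.
Variable D : digraph.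

Lemma acyclic_in_sub (S S' : pred D) :
  {subset S <= S'} -> acyclic_in S' -> acyclic_in S.
Proof.
by move=> sSS' acyc s s0 /allP Ss; apply: acyc s0 _; apply/allP => y /Ss /sSS'.
Qed.

Lemma acyclic_in_U1 (S : pred D) (x : D) :
  acyclic_in [predD1 S & x] ->
  {in S, forall y, ~~ darc x y} \/ {in S, forall y, ~~ darc y x} ->
  acyclic_in S.
Proof.
move=> acyc nbr s s0 /allP Ss; apply/negP => cyc.
have [xs | xNs] := boolP (x \in s); last first.
  have : all [predD1 S & x] s.
    apply/allP => y ys; rewrite !inE [y \in S]Ss // andbT.
    by apply: contraNneq xNs => <-.
  by move/(acyc s s0); rewrite cyc.
case: nbr => nbr.
- have nx : next s x \in s by rewrite mem_next.
  by move: (nbr _ (Ss _ nx)); rewrite (next_cycle cyc xs).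
- have px : prev s x \in s by rewrite mem_prev.
  by move: (nbr _ (Ss _ px)); rewrite (prev_cycle cyc xs).
Qed.

Definition colorable_on (m : nat) (S : {set D}) : Prop :=
  exists f : D -> 'I_m, forall i, acyclic_in [pred y | (y \in S) && (f y == i)].

Lemma colorable_on_setT m : colorable_on m [set: D] -> dicolorable D m.
Proof. by case=> f acyc; exists f => i; apply: acyclic_in_sub (acyc i) => y; rewrite !inE. Qed.

Lemma colorable_on_set0 m : colorable_on m.+1 finset.set0.
Proof.
exists (fun=> ord0) => i [//|y s] _ /allP /(_ y (mem_head y s)).
by rewrite !inE.
Qed.

Lemma exists_color_avoiding m (f : D -> 'I_m) (N : {set D}) :
  (#|N| < m)%N -> exists c, {in N, forall y, f y != c}.
Proof.
move=> smallN; apply: contrapT => all_used.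
have : [set: 'I_m] \subset f @: N.
  apply/fintype.subsetP => c _; apply: contrapT => cNf; apply: all_used; exists c => y yN.
  by apply/eqP => fyc; apply: cNf; rewrite -fyc; exact: imset_f.
move/subset_leq_card; rewrite cardsT card_ord => /leq_trans/(_ (leq_imset_card f N)).
by rewrite leqNgt smallN.
Qed.

Lemma colorable_on_U1 m (S : {set D}) (x : D) :
  (#|[set y in S | darc x y]| < m)%N || (#|[set y in S | darc y x]| < m)%N ->
  colorable_on m (S :\ x) -> colorable_on m S.
Proof.
move=> small [f acyc].
have [c free] : exists c : 'I_m,
    {in S, forall y, f y == c -> ~~ darc x y} \/ {in S, forall y, f y == c -> ~~ darc y x}.
  by case/orP: small => /(exists_color_avoiding f) [c avoid]; exists c; [left|right];
    move=> y yS; apply: contraTN => arc; rewrite avoid // inE yS.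
pose g y := if y == x then c else f y.
exists g => i.
have sub : {subset [predD1 [pred y | (y \in S) && (g y == i)] & x]
                   <= [pred y | (y \in S :\ x) && (f y == i)]}.
  by move=> y; rewrite !inE /g; case: (y =P x).
have [ci | ci] := eqVneq c i.
- subst i; apply: acyclic_in_U1 (acyclic_in_sub sub (acyc c)) _.
  by case: free => free; [left|right] => y; rewrite inE /g;
    case: (y =P x) => [-> _|_ /andP[yS /(free _ yS)] //]; rewrite darc_irr.
- apply: acyclic_in_sub (acyclic_in_sub sub (acyc i)) => y; rewrite !inE /g.
  by case: (y =P x) => [->|_]; rewrite ?(negbTE ci) ?andbF.
Qed.

Definition min_semidegree_ge (m : nat) (T : {set D}) : Prop :=
  {in T, forall x, (m <= #|[set y in T | darc x y]|)%N /\ (m <= #|[set y in T | darc y x]|)%N}.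

Lemma noncolorable_min_semidegree m (S : {set D}) :
  ~ colorable_on m S -> exists2 T : {set D}, ~ colorable_on m T & min_semidegree_ge m T.
Proof.
have [n] := ubnP #|S|; elim: n S => // n IH S /ltnSE leSn noncol.
have [mindeg | notmin] := pselect (min_semidegree_ge m S); first by exists S.
have [x xS small] : exists2 x, x \in S &
    (#|[set y in S | darc x y]| < m)%N || (#|[set y in S | darc y x]| < m)%N.
  apply: contrapT => none; apply: notmin => x xS.
  by split; rewrite leqNgt; apply/negP => lt; apply: none; exists x; rewrite // lt ?orbT.
apply: (IH (S :\ x)); first by move: leSn; rewrite (cardsD1 x S) xS.
by move=> col; apply: noncol (colorable_on_U1 small col).
Qed.

End Dicoloring.

Section Induced.
Variables (D : digraph) (T : {set D}).

Definition induced_arc : rel {x : D | x \in T} := fun x y => darc (val x) (val y).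

Lemma induced_arc_irr : irreflexive induced_arc.
Proof. by move=> x; rewrite /induced_arc darc_irr. Qed.

Definition induced : digraph := Digraph induced_arc_irr.

Lemma path_induced (x : induced) (p : seq induced) :
  path (@darc D) (val x) (map val p) = path (@darc induced) x p.
Proof. by elim: p x => //= y p IH x; rewrite IH. Qed.

Lemma contains_subdivision_induced (F : digraph) :
  contains_subdivision F induced -> contains_subdivision F D.
Proof.
case=> phi [P [phi_inj [paths disj]]].
exists (fun z => val (phi z)), (fun x y => map val (P x y)); split.
  by move=> a b /val_inj /phi_inj.
split=> [x y xy | x y x' y' xy xy' ne].
  have [p u n] := paths x y xy; split.
  - by rewrite -map_rcons path_induced.
  - by rewrite map_inj_uniq //; exact: val_inj.
  - by move=> z; rewrite mem_map //; exact: val_inj.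
rewrite disjoint_has; apply/hasPn => z /mapP [u uP ->] /=.
by rewrite mem_map; [exact: negbT (disjointFr (disj _ _ _ _ xy xy' ne) uP) | exact: val_inj].
Qed.

Lemma card_induced (P : pred D) :
  #|[set y : induced | P (val y)]| = #|[set y in T | P y]|.
Proof.
rewrite -(card_imset _ val_inj); apply: eq_card => y; rewrite [in RHS]inE.
apply/imsetP/andP => [[z]|[yT Py]]; first by rewrite inE => Pz ->; rewrite (valP z).
by exists (Sub y yT); rewrite ?inE //= SubK.
Qed.

Lemma delta0_induced m : T != finset.set0 -> min_semidegree_ge m T -> (m <= delta0 induced)%N.
Proof.
move=> /set0Pn [x0 x0T] mindeg; apply: (big_ind (leq m)) => [||x _].
- apply: leq_trans (mindeg x0 x0T).1 _.
  by rewrite -(card_induced (darc x0)); exact: max_card.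
- by move=> a b; rewrite leq_min => ->.
- have [out_ge in_ge] := mindeg _ (valP x).
  rewrite -(card_induced (darc (val x))) in out_ge.
  rewrite -(card_induced (fun y => darc y (val x))) in in_ge.
  by rewrite leq_min out_ge in_ge.
Qed.

End Induced.

Lemma dicolorable_card (D : digraph) : dicolorable D #|D|.
Proof.
exists (@enum_rank D) => i [//|a s] _ /allP same; apply/negP.
have eq_a y : y \in a :: s -> y = a.
  move=> ys; have := same _ ys; have := same _ (mem_head a s).
  by rewrite !inE => /eqP <- /eqP /enum_rank_inj.
by rewrite /= rcons_path (eq_a _ (mem_last a s)) darc_irr andbF.
Qed.

Lemma dichromatic_le (D : digraph) m : dicolorable D m -> (dichromatic D <= m)%N.
Proof.
have [_ chi_min] := @xget_least (dicolorable D) (ex_intro _ _ (dicolorable_card D)).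
exact: chi_min.
Qed.

Lemma not_dicolorable_delta0_induced (D : digraph) m :
  ~ dicolorable D m -> exists T : {set D}, (m <= delta0 (induced T))%N.
Proof.
case: m => [_|m noncol]; first by exists [set: D]%SET.
have [T noncolT mindeg] :=
  noncolorable_min_semidegree (fun col => noncol (colorable_on_setT col)).
exists T; apply: delta0_induced mindeg.
by apply: contra_notN noncolT => /eqP ->; exact: colorable_on_set0.
Qed.

Lemma mad_bound_dichromatic (F : digraph) c :
  mad_bound delta0 F c -> mad_bound dichromatic F c.+1.
Proof.
move=> madF D chiD.
have [T deltaT] : exists T : {set D}, (c <= delta0 (induced T))%N.
  apply: not_dicolorable_delta0_induced => col.
  by have := leq_trans chiD (dichromatic_le col); rewrite ltnn.
exact: contains_subdivision_induced (madF _ deltaT).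
Qed.

Theorem corollary34 (F : digraph) :
  maderian delta0 F ->
  maderian dichromatic F /\ (mad dichromatic F <= mad delta0 F + 1)%N.
Proof.
move=> madF.
have [mad_delta0 _] := @xget_least (mad_bound delta0 F) madF.
have mad_chi := mad_bound_dichromatic mad_delta0.
have chiF : maderian dichromatic F by exists (mad delta0 F).+1.
split=> //; rewrite addn1.
have [_ mad_chi_min] := @xget_least (mad_bound dichromatic F) chiF.
exact: mad_chi_min.
Qed.
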